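(* Every finitely generated infinite amenable group is extraterrestrial.
   Context: A finitely generated group is extraterrestrial if its Cayley graph $\mathrm{Cay}(\Gamma,S)$ with respect to some (equivalently any) finite symmetric generating set $S$ is extraterrestrial. A graph $G=(V,E)$ is extraterrestrial if for every $m\in\mathbb N$ there exists $k\in\mathbb N$ such that for every $r\in\mathbb N$ there exists an $(m,k,r)$-UFO: a triple $(U,F,O)$ of pairwise disjoint finite subsets of $V$ with $U\neq\emptyset$ such that $|U|\ge m|F|$, there is a bijection $\mu:U\to O$ with $d_G(u,\mu(u))\le k$ for all $u$, and every path (sequence of distinct vertices with consecutive ones adjacent) from a vertex of $U$ to a vertex of $O$ either contains a vertex of $F$ or has length at least $r$. *)

From Stdlib Require Import Reals List Arith.
Import ListNotations.
Open Scope R_scope.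

Record IsGroup {G : Type} (mul : G -> G -> G) (inv : G -> G) (e : G) : Prop := {
  grp_assoc : forall x y z, mul x (mul y z) = mul (mul x y) z;
  grp_idl : forall x, mul e x = x;
  grp_idr : forall x, mul x e = x;
  grp_invl : forall x, mul (inv x) x = e;
  grp_invr : forall x, mul x (inv x) = e }.

Definition InfiniteType (G : Type) : Prop :=
  ~ exists l : list G, forall x, In x l.

Definition Symmetric {G : Type} (inv : G -> G) (S : list G) : Prop :=
  forall s, In s S -> In (inv s) S.

Definition Generates {G : Type} (mul : G -> G -> G) (inv : G -> G) (e : G)
  (S : list G) : Prop :=
  forall g, exists l : list G,
    Forall (fun t => In t S \/ In (inv t) S) l /\ g = fold_right mul e l.

Definition FinitelyGenerated {G : Type} (mul : G -> G -> G) (inv : G -> G)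
  (e : G) : Prop :=
  exists S : list G, Generates mul inv e S.

Definition Amenable {G : Type} (mul : G -> G -> G) (inv : G -> G) : Prop :=
  exists m : (G -> Prop) -> R,
    (forall A, 0 <= m A) /\
    m (fun _ => True) = 1 /\
    (forall A B, (forall x, ~ (A x /\ B x)) ->
        m (fun x => A x \/ B x) = m A + m B) /\
    (forall g A, m (fun x => A (mul (inv g) x)) = m A).

Definition cayley_adj {G : Type} (mul : G -> G -> G) (S : list G) (x y : G) : Prop :=
  x <> y /\ exists s, In s S /\ y = mul x s.

Fixpoint dist_le {V : Type} (adj : V -> V -> Prop) (k : nat) (u v : V) : Prop :=
  match k with
  | O => u = v
  | S k' => u = v \/ exists w, adj u w /\ dist_le adj k' w v
  end.

Fixpoint chain {V : Type} (adj : V -> V -> Prop) (x : V) (l : list V) : Prop :=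
  match l with
  | [] => True
  | y :: l' => adj x y /\ chain adj y l'
  end.

(** The path u :: l (distinct vertices, consecutive adjacent) from u to
    [last l u]; its length is [length l]. *)
Definition is_path {V : Type} (adj : V -> V -> Prop) (u : V) (l : list V) : Prop :=
  NoDup (u :: l) /\ chain adj u l.

Definition disjoint_lists {V : Type} (A B : list V) : Prop :=
  forall x, In x A -> ~ In x B.

(** (m,k,r)-UFO; finite vertex sets are given as duplicate-free lists. *)
Definition UFO {V : Type} (adj : V -> V -> Prop) (m k r : nat)
  (U F O : list V) : Prop :=
  NoDup U /\ NoDup F /\ NoDup O /\
  disjoint_lists U F /\ disjoint_lists U O /\ disjoint_lists F O /\
  U <> [] /\
  (m * length F <= length U)%nat /\
  (exists mu : V -> V,
      (forall u, In u U -> In (mu u) O) /\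
      (forall u1 u2, In u1 U -> In u2 U -> mu u1 = mu u2 -> u1 = u2) /\
      (forall o, In o O -> exists u, In u U /\ mu u = o) /\
      (forall u, In u U -> dist_le adj k u (mu u))) /\
  (forall u l, In u U -> is_path adj u l -> In (last l u) O ->
      (exists x, In x (u :: l) /\ In x F) \/ (r <= length l)%nat).

Definition Extraterrestrial {V : Type} (adj : V -> V -> Prop) : Prop :=
  forall m : nat, exists k : nat, forall r : nat,
    exists U F O : list V, UFO adj m k r U F O.

(** A finitely generated group is extraterrestrial: its Cayley graph w.r.t.
    a finite symmetric generating set is extraterrestrial.  We use the
    "any generating set" form of the definition. *)
Definition ExtraterrestrialGroup {G : Type} (mul : G -> G -> G) (inv : G -> G)
  (e : G) : Prop :=
  forall S : list G, Symmetric inv S -> Generates mul inv e S ->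
    Extraterrestrial (cayley_adj mul S).

(* An invariant mean rules out strong isoperimetry: if |X| <= N |∂X| for
   every finite X, then balls of radius N double every finite set, Hall's
   theorem and a compactness argument give a map x |-> (x t1(x), x t2(x))
   that is injective with disjoint halves, and the reflected mean would give
   its image mass 2.  Hence there are Følner sets, and by descent a set A
   whose boundary, of size beta, cannot be halved by any set that is not much
   smaller than A.  Match points of A greedily with points at distance <= k
   outside A ∪ ∂A.  If the matching has at least (m+1) beta edges, its two
   sides with F = ∂A form a UFO.  Otherwise the unmatched part of A could be
   thickened k times inside A ∪ ∂A ∪ (matched outside points), gaining
   beta/2 points at each step, which is impossible for k = 4(m+1)+2. *)

From Stdlib Require Import Reals List.
From Stdlib Require Import Bool Arith Lia Lra Classical ClassicalEpsilon.
From Stdlib Require Import FunctionalExtensionality PropExtensionality.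
Import ListNotations.
Local Open Scope nat_scope.

Definition dec {X : Type} (x y : X) : {x = y} + {x <> y} :=
  excluded_middle_informative (x = y).

Definition card {X : Type} (l : list X) : nat := length (nodup dec l).

Definition inb {X : Type} (x : X) (l : list X) : bool :=
  if in_dec dec x l then true else false.

Definition setminus {X : Type} (l1 l2 : list X) : list X :=
  filter (fun x => negb (inb x l2)) l1.

Section FiniteSets.
Context {X : Type}.
Implicit Types (l : list X) (x : X).

Lemma in_setminus x l1 l2 : In x (setminus l1 l2) <-> In x l1 /\ ~ In x l2.
Proof.
  unfold setminus, inb. rewrite filter_In.
  destruct (in_dec dec x l2); simpl; intuition discriminate.
Qed.

Lemma length_setminus_lt x l1 l2 :
  In x l1 -> In x l2 -> length (setminus l1 l2) < length l1.
Proof.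
  intros H1 H2. unfold setminus. pose proof (filter_length_le (fun y => negb (inb y l2)) l1).
  enough (length (filter (fun y => negb (inb y l2)) l1) <> length l1) by lia.
  intros Heq. apply filter_length_forallb in Heq. rewrite forallb_forall in Heq.
  specialize (Heq x H1). unfold inb in Heq.
  destruct (in_dec dec x l2); [discriminate | contradiction].
Qed.

Lemma card_incl l1 l2 : incl l1 l2 -> card l1 <= card l2.
Proof.
  intros H. apply NoDup_incl_length; [apply NoDup_nodup|].
  intros x Hx. apply nodup_In, H, (nodup_In dec). exact Hx.
Qed.

Lemma card_le_length l : card l <= length l.
Proof.
  apply NoDup_incl_length; [apply NoDup_nodup|].
  intros x Hx. apply (nodup_In dec). exact Hx.
Qed.

Lemma card_NoDup l : NoDup l -> card l = length l.
Proof. intros H. unfold card. rewrite nodup_fixed_point; auto. Qed.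

Lemma card_app_le l1 l2 : card (l1 ++ l2) <= card l1 + card l2.
Proof.
  unfold card at 2 3. rewrite <- length_app.
  etransitivity; [|apply card_le_length]. apply card_incl.
  intros x. rewrite !in_app_iff, !nodup_In. tauto.
Qed.

Lemma card_app_disjoint l1 l2 :
  (forall x, In x l1 -> ~ In x l2) -> card (l1 ++ l2) = card l1 + card l2.
Proof.
  intros H. apply Nat.le_antisymm; [apply card_app_le|].
  unfold card at 1 2. rewrite <- length_app, <- card_NoDup.
  - apply card_incl. intros x. rewrite !in_app_iff, !nodup_In. tauto.
  - apply NoDup_app; try apply NoDup_nodup.
    intros x Hx1 Hx2. rewrite nodup_In in Hx1, Hx2. exact (H x Hx1 Hx2).
Qed.

Lemma card_eq0 l : card l = 0 -> l = [].
Proof.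
  destruct l as [|x l]; [reflexivity|]. unfold card. intros H.
  apply length_zero_iff_nil in H.
  assert (Hx : In x (nodup dec (x :: l))) by (apply nodup_In; left; reflexivity).
  rewrite H in Hx. destruct Hx.
Qed.

End FiniteSets.

Lemma NoDup_map_inj {X Y : Type} (f : X -> Y) l x y :
  NoDup (map f l) -> In x l -> In y l -> f x = f y -> x = y.
Proof.
  induction l as [|a l IH]; intros Hnd Hx Hy Hf; [destruct Hx|].
  inversion Hnd as [|? ? Ha Hnd']; subst.
  destruct Hx as [<-|Hx], Hy as [<-|Hy]; auto;
    exfalso; apply Ha; [rewrite Hf | rewrite <- Hf]; apply in_map; assumption.
Qed.

Lemma NoDup_fst_function {X Y : Type} (y0 : Y) (Ms : list (X * Y)) :
  NoDup (map fst Ms) -> exists mu : X -> Y, forall p, In p Ms -> mu (fst p) = snd p.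
Proof.
  induction Ms as [|p Ms IH]; intros Hnd.
  - exists (fun _ => y0). intros ? [].
  - inversion Hnd as [|? ? Hp Hnd']; subst. destruct (IH Hnd') as [mu Hmu].
    exists (fun x => if dec x (fst p) then snd p else mu x).
    intros q Hq. destruct (dec (fst q) (fst p)) as [E|E].
    + destruct Hq as [<-|Hq]; [reflexivity|]. exfalso. apply Hp. rewrite <- E. apply in_map, Hq.
    + destruct Hq as [<-|Hq]; [contradiction | auto].
Qed.

Lemma exists_least (P : nat -> Prop) :
  (exists n, P n) -> exists n, P n /\ forall j, j < n -> ~ P j.
Proof.
  intros [n Hn]. induction n as [n IH] using lt_wf_ind.
  destruct (classic (exists j, j < n /\ P j)) as [[j [Hj HPj]]|Hno]; [exact (IH j Hj HPj)|].
  exists n. split; [exact Hn|]. intros j Hj HPj. apply Hno. eauto.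
Qed.

Lemma eventually_forall_in {X : Type} (L : list X) (P : X -> nat -> Prop) :
  (forall c, In c L -> exists M, forall n, M <= n -> P c n) ->
  exists M, forall c, In c L -> forall n, M <= n -> P c n.
Proof.
  induction L as [|a L IH]; intros H; [exists 0; intros ? []|].
  destruct (H a (or_introl eq_refl)) as [Ma HMa].
  destruct IH as [M HM]; [intros c Hc; apply H; right; exact Hc|].
  exists (Ma + M). intros c [<-|Hc] n Hn; [apply HMa | apply HM]; auto; lia.
Qed.

Lemma last_cons {X : Type} (y u : X) l : last (y :: l) u = last l y.
Proof.
  revert y u. induction l as [|z l IH]; intros y u; [reflexivity|].
  change (last (z :: l) u = last (z :: l) y). rewrite !IH. reflexivity.
Qed.

(** * Hall's marriage theorem *)

Section Hall.
Variables A B : Type.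
Implicit Types (nb : A -> list B) (L Y : list A).

Definition HallCond nb L := forall Y, incl Y L -> card Y <= card (flat_map nb Y).

Definition Matching nb L (f : A -> B) :=
  (forall a, In a L -> In (f a) (nb a)) /\
  (forall a1 a2, In a1 L -> In a2 L -> f a1 = f a2 -> a1 = a2).

Definition prune nb (Z : list B) : A -> list B := fun a => setminus (nb a) Z.

Lemma HallCond_incl nb L Y : HallCond nb L -> incl Y L -> HallCond nb Y.
Proof. intros HH HY Z HZ. apply HH. intros x Hx. apply HY, HZ, Hx. Qed.

Lemma Matching_prune nb Z L f :
  Matching (prune nb Z) L f -> Matching nb L f /\ forall a, In a L -> ~ In (f a) Z.
Proof.
  intros [Him Hinj]. repeat split; auto;
    intros a Ha; specialize (Him a Ha); apply in_setminus in Him; tauto.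
Qed.

Lemma Matching_glue nb Y R L f1 f2 :
  (forall a, In a L -> In a Y \/ In a R) ->
  Matching nb Y f1 -> Matching nb R f2 ->
  (forall a1 a2, In a1 Y -> In a2 R -> f1 a1 <> f2 a2) ->
  Matching nb L (fun a => if in_dec dec a Y then f1 a else f2 a).
Proof.
  intros HL [Him1 Hinj1] [Him2 Hinj2] Hdisj. split.
  - intros a Ha. destruct (in_dec dec a Y) as [HY|HY]; auto.
    destruct (HL a Ha); [contradiction | auto].
  - intros a1 a2 Ha1 Ha2.
    destruct (in_dec dec a1 Y) as [HY1|HY1], (in_dec dec a2 Y) as [HY2|HY2]; auto.
    + destruct (HL a2 Ha2); [contradiction|]. intros E. exfalso. exact (Hdisj a1 a2 HY1 H E).
    + destruct (HL a1 Ha1); [contradiction|]. intros E. exfalso.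
      exact (Hdisj a2 a1 HY2 H (eq_sym E)).
    + destruct (HL a1 Ha1), (HL a2 Ha2); try contradiction. auto.
Qed.

Lemma HallCond_prune_critical nb L Y :
  HallCond nb L -> incl Y L -> card (flat_map nb Y) <= card Y ->
  HallCond (prune nb (flat_map nb Y)) (setminus L Y).
Proof.
  intros HH HYL HY Z HZ.
  assert (HZY : forall a, In a Z -> In a L /\ ~ In a Y).
  { intros a Ha. apply in_setminus, HZ, Ha. }
  assert (Hall : card (Z ++ Y) <= card (flat_map nb (Z ++ Y))).
  { apply HH. intros a Ha. apply in_app_iff in Ha as [Ha|Ha]; [apply HZY|apply HYL]; auto. }
  rewrite card_app_disjoint in Hall by (intros a Ha; apply HZY, Ha).
  assert (Hsplit : card (flat_map nb (Z ++ Y))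
                   <= card (flat_map (prune nb (flat_map nb Y)) Z) + card (flat_map nb Y)).
  { etransitivity; [|apply card_app_le]. apply card_incl.
    intros b Hb. apply in_app_iff.
    destruct (in_dec dec b (flat_map nb Y)) as [HbY|HbY]; [right; exact HbY|left].
    rewrite flat_map_app, in_app_iff in Hb. destruct Hb as [Hb|Hb]; [|contradiction].
    apply in_flat_map in Hb as [a [Ha Hb]]. apply in_flat_map.
    exists a. split; [exact Ha|]. apply in_setminus. auto. }
  lia.
Qed.

Lemma HallCond_prune_surplus nb L b :
  (forall Y, incl Y L -> Y <> [] -> card Y < card (flat_map nb Y)) ->
  HallCond (prune nb [b]) L.
Proof.
  intros Hsur [|a Y] HY; [apply Nat.le_0_l|].
  specialize (Hsur (a :: Y) HY ltac:(discriminate)).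
  enough (card (flat_map nb (a :: Y)) <= card (flat_map (prune nb [b]) (a :: Y)) + 1) by lia.
  change 1 with (card [b]). etransitivity; [|apply card_app_le].
  apply card_incl. intros c Hc. apply in_app_iff.
  destruct (dec c b) as [->|Hcb]; [right; left; reflexivity|left].
  apply in_flat_map in Hc as [x [Hx Hc]]. apply in_flat_map. exists x. split; [exact Hx|].
  apply in_setminus. split; [exact Hc|]. intros [E|[]]. auto.
Qed.

Theorem hall (b0 : B) nb L : NoDup L -> HallCond nb L -> exists f, Matching nb L f.
Proof.
  remember (length L) as n eqn:Hn. revert nb L Hn.
  induction n as [n IH] using lt_wf_ind. intros nb [|a L'] Hn Hnd HH.
  { exists (fun _ => b0). split; [intros ? []|intros ? ? []]. }
  simpl in Hn. inversion Hnd as [|? ? HaL' HndL']; subst.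
  (* Either some nonempty [Y] inside [L'] is critical, and [Y] and the rest
     are matched separately, the rest avoiding the neighbours of [Y]; or every
     such [Y] has a surplus, and [a] may take any of its neighbours. *)
  destruct (classic (exists Y, incl Y L' /\ Y <> [] /\ card (flat_map nb Y) <= card Y))
    as [[Y [HYL [HY HYc]]] | Hsurplus].
  - destruct Y as [|y Y']; [congruence|]. set (Y := y :: Y') in *. set (Y0 := nodup dec Y).
    assert (HY0 : forall x, In x Y0 <-> In x Y) by (intros; apply nodup_In).
    assert (HY0L : incl Y0 (a :: L')) by (intros x Hx; right; apply HYL, HY0, Hx).
    assert (HY0len : length Y0 < S (length L')).
    { change (length Y0) with (card Y).
      pose proof (card_incl _ _ HYL). pose proof (card_le_length L'). lia. }
    destruct (IH (length Y0) HY0len nb Y0 eq_refl (NoDup_nodup _ _)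
                (HallCond_incl _ _ _ HH HY0L)) as [f1 Hf1].
    set (R := setminus (a :: L') Y).
    assert (HRlt : length R < S (length L'))
      by exact (length_setminus_lt y (a :: L') Y
                  (or_intror (HYL y (or_introl eq_refl))) (or_introl eq_refl)).
    destruct (IH (length R) HRlt _ R eq_refl (NoDup_filter _ Hnd)
                (HallCond_prune_critical _ _ _ HH (fun x Hx => or_intror (HYL x Hx)) HYc))
      as [f2 [Hf2 Hf2out]%Matching_prune].
    eexists. apply (Matching_glue _ Y0 R); eauto.
    + intros x Hx. destruct (in_dec dec x Y) as [HxY|HxY].
      * left. apply HY0, HxY.
      * right. apply in_setminus. auto.
    + intros x1 x2 Hx1 Hx2 E. apply (Hf2out x2 Hx2). rewrite <- E.
      apply in_flat_map. exists x1. split; [apply HY0, Hx1 | apply (proj1 Hf1), Hx1].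
  - assert (Hsur : forall Y, incl Y L' -> Y <> [] -> card Y < card (flat_map nb Y)).
    { intros Y HYL HY. apply Nat.nle_gt. intros HYc. apply Hsurplus. eauto. }
    destruct (nb a) as [|b bs] eqn:Ea.
    { specialize (HH [a] ltac:(intros x [<-|[]]; left; reflexivity)).
      simpl in HH. rewrite Ea in HH. cbn in HH. lia. }
    destruct (IH (length L') ltac:(lia) _ L' eq_refl HndL' (HallCond_prune_surplus _ _ b Hsur))
      as [f2 [Hf2 Hf2out]%Matching_prune].
    eexists. apply (Matching_glue _ [a] L' _ (fun _ => b)); eauto.
    + intros x [<-|Hx]; [left; left|right]; auto.
    + split; [intros x [<-|[]]; rewrite Ea; left; reflexivity|].
      intros x1 x2 [<-|[]] [<-|[]] _; reflexivity.
    + intros x1 x2 _ Hx2 E. apply (Hf2out x2 Hx2). rewrite <- E. left; reflexivity.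
Qed.

End Hall.

Section MaximalMatching.
Variables X Y : Type.
Implicit Types (Ms cs : list (X * Y)) (c : X * Y).

Fixpoint greedy Ms cs : list (X * Y) :=
  match cs with
  | [] => Ms
  | c :: cs' => if inb (fst c) (map fst Ms) || inb (snd c) (map snd Ms)
                then greedy Ms cs' else greedy (c :: Ms) cs'
  end.

Lemma greedy_sub Ms cs c : In c (greedy Ms cs) -> In c Ms \/ In c cs.
Proof.
  revert Ms; induction cs as [|c' cs IH]; intros Ms H; simpl in H; auto.
  destruct (_ || _); destruct (IH _ H) as [H'|H']; simpl; auto.
  destruct H'; auto.
Qed.

Lemma greedy_incl Ms cs : incl Ms (greedy Ms cs).
Proof.
  revert Ms; induction cs as [|c cs IH]; intros Ms; simpl; [apply incl_refl|].
  destruct (_ || _); [apply IH|]. intros p Hp. apply IH. right; exact Hp.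
Qed.

Lemma greedy_NoDup Ms cs : NoDup (map fst Ms) -> NoDup (map snd Ms) ->
  NoDup (map fst (greedy Ms cs)) /\ NoDup (map snd (greedy Ms cs)).
Proof.
  revert Ms; induction cs as [|c cs IH]; intros Ms H1 H2; simpl; auto.
  unfold inb. destruct (in_dec dec (fst c) _), (in_dec dec (snd c) _); simpl; auto.
  apply IH; simpl; constructor; auto.
Qed.

Lemma greedy_maximal Ms cs c : In c cs ->
  In (fst c) (map fst (greedy Ms cs)) \/ In (snd c) (map snd (greedy Ms cs)).
Proof.
  revert Ms; induction cs as [|c' cs IH]; intros Ms Hc; [destruct Hc|].
  destruct Hc as [->|Hc]; simpl; [|destruct (_ || _); auto].
  unfold inb. destruct (in_dec dec (fst c) _) as [H1|H1]; simpl.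
  - left. apply in_map_iff in H1 as [p [<- Hp]]. apply in_map, greedy_incl, Hp.
  - destruct (in_dec dec (snd c) _) as [H2|H2]; simpl.
    + right. apply in_map_iff in H2 as [p [<- Hp]]. apply in_map, greedy_incl, Hp.
    + left. apply in_map, greedy_incl. left; reflexivity.
Qed.

Lemma exists_maximal_matching cs : exists Ms,
  incl Ms cs /\ NoDup (map fst Ms) /\ NoDup (map snd Ms) /\
  forall c, In c cs -> In (fst c) (map fst Ms) \/ In (snd c) (map snd Ms).
Proof.
  exists (greedy [] cs).
  destruct (greedy_NoDup [] cs (NoDup_nil _) (NoDup_nil _)) as [H1 H2].
  repeat split; auto.
  - intros c Hc. destruct (greedy_sub _ _ _ Hc) as [[]|H]; exact H.
  - intros c Hc. apply greedy_maximal, Hc.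
Qed.

End MaximalMatching.

(** * Groups and invariant means *)

Section Group.
Variables (G : Type) (mul : G -> G -> G) (inv : G -> G) (e : G).
Hypothesis HG : IsGroup mul inv e.

Lemma mulA x y z : mul x (mul y z) = mul (mul x y) z. Proof. apply (grp_assoc _ _ _ HG). Qed.
Lemma mul1g x : mul e x = x. Proof. apply (grp_idl _ _ _ HG). Qed.
Lemma mulg1 x : mul x e = x. Proof. apply (grp_idr _ _ _ HG). Qed.
Lemma mulVg x : mul (inv x) x = e. Proof. apply (grp_invl _ _ _ HG). Qed.
Lemma mulgV x : mul x (inv x) = e. Proof. apply (grp_invr _ _ _ HG). Qed.

Lemma mulKg x y : mul (inv x) (mul x y) = y.
Proof. rewrite mulA, mulVg, mul1g. reflexivity. Qed.
Lemma mulKVg x y : mul x (mul (inv x) y) = y.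
Proof. rewrite mulA, mulgV, mul1g. reflexivity. Qed.
Lemma mulgK x y : mul (mul y x) (inv x) = y.
Proof. rewrite <- mulA, mulgV, mulg1. reflexivity. Qed.
Lemma mulgKV x y : mul (mul y (inv x)) x = y.
Proof. rewrite <- mulA, mulVg, mulg1. reflexivity. Qed.

Lemma invgK x : inv (inv x) = x.
Proof.
  rewrite <- (mul1g (inv (inv x))), <- (mulgV x), <- mulA, mulgV, mulg1. reflexivity.
Qed.

Lemma mulgI z x y : mul z x = mul z y -> x = y.
Proof. intros H. rewrite <- (mulKg z x), H, mulKg. reflexivity. Qed.

Lemma invMg x y : inv (mul x y) = mul (inv y) (inv x).
Proof.
  apply (mulgI (mul x y)). rewrite mulgV, mulA, mulgK, mulgV. reflexivity.
Qed.

Section InvariantMean.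
Variable m : (G -> Prop) -> R.
Hypothesis m_ge0 : forall A, (0 <= m A)%R.
Hypothesis m_full : m (fun _ => True) = 1%R.
Hypothesis m_add : forall A B, (forall x, ~ (A x /\ B x)) ->
  m (fun x => A x \/ B x) = (m A + m B)%R.
Hypothesis m_linv : forall g A, m (fun x => A (mul (inv g) x)) = m A.

(* The reflected mean, invariant under right translations. *)
Definition nu (P : G -> Prop) : R := m (fun x => P (inv x)).

Lemma nu_ext P Q : (forall x, P x <-> Q x) -> nu P = nu Q.
Proof.
  intros H. f_equal. apply functional_extensionality. intros x.
  apply propositional_extensionality, H.
Qed.

Lemma nu_add P Q : (forall x, ~ (P x /\ Q x)) ->
  nu (fun x => P x \/ Q x) = (nu P + nu Q)%R.
Proof. intros H. apply m_add. intros x. apply H. Qed.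

Lemma nu_rinv P t : nu (fun y => P (mul y t)) = nu P.
Proof.
  unfold nu. rewrite <- (m_linv t (fun z => P (inv z))). f_equal.
  apply functional_extensionality. intros x. rewrite invMg, invgK. reflexivity.
Qed.

Lemma nu_empty : nu (fun _ => False) = 0%R.
Proof.
  pose proof (nu_add (fun _ => False) (fun _ => False) ltac:(tauto)) as H.
  rewrite (nu_ext _ (fun _ => False)) in H by tauto. lra.
Qed.

Lemma nu_le1 P : (nu P <= 1)%R.
Proof.
  pose proof (nu_add P (fun x => ~ P x) ltac:(tauto)) as H.
  rewrite (nu_ext _ (fun _ => True)) in H by (intros x; pose proof (classic (P x)); tauto).
  assert (0 <= nu (fun x => ~ P x))%R by apply m_ge0.
  unfold nu at 1 in H. rewrite m_full in H. lra.
Qed.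

Lemma nu_union (L : list G) (Q : G -> G -> Prop) : NoDup L ->
  (forall t t' x, In t L -> In t' L -> t <> t' -> Q t x -> Q t' x -> False) ->
  nu (fun x => exists t, In t L /\ Q t x) = fold_right Rplus 0%R (map (fun t => nu (Q t)) L).
Proof.
  induction L as [|a L IH]; intros Hnd Hdisj; simpl.
  - rewrite <- nu_empty. apply nu_ext. firstorder.
  - inversion Hnd as [|? ? HaL HndL]; subst.
    rewrite <- IH by (auto; intros t t' x Ht Ht'; apply Hdisj; right; auto).
    rewrite <- nu_add.
    + apply nu_ext. intros x. split.
      * intros [t [[<-|Ht] Hq]]; [left | right; exists t]; auto.
      * intros [Hq|[t [Ht Hq]]]; eauto.
    + intros x [Hq [t [Ht Hq']]]. apply (Hdisj a t x); auto; [left|right|intros <-]; auto.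
Qed.

(* Splitting the image according to the value [t = phi x] exhibits it as a
   disjoint union of right translates of the level sets of [phi], which
   partition [G]. *)
Lemma nu_translate_image (T : list G) (phi : G -> G) :
  (forall x, In (phi x) T) ->
  (forall x y, x <> y -> mul x (phi x) <> mul y (phi y)) ->
  nu (fun y => exists x, y = mul x (phi x)) = 1%R.
Proof.
  intros HT Hinj. set (Tn := nodup dec T).
  assert (HTn : forall t, In t Tn <-> In t T) by (intros; apply nodup_In).
  transitivity (nu (fun y => exists t, In t Tn /\ phi (mul y (inv t)) = t)).
  { apply nu_ext. intros y. split.
    - intros [x ->]. exists (phi x). rewrite HTn, mulgK. auto.
    - intros [t [_ Ht]]. exists (mul y (inv t)). rewrite Ht, mulgKV. reflexivity. }
  rewrite nu_union.
  2: apply NoDup_nodup.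
  2: { intros t t' y _ _ Htt' H1 H2. apply Htt'. rewrite <- H1, <- H2.
       destruct (dec (mul y (inv t)) (mul y (inv t'))) as [E|E]; [rewrite E; reflexivity|].
       exfalso. apply (Hinj _ _ E). rewrite H1, H2, !mulgKV. reflexivity. }
  erewrite map_ext by (intros t; exact (nu_rinv (fun x => phi x = t) (inv t))).
  rewrite <- nu_union.
  - rewrite <- m_full. change (m (fun _ => True)) with (nu (fun _ => True)).
    apply nu_ext. intros x. split; [auto|]. exists (phi x). rewrite HTn. auto.
  - apply NoDup_nodup.
  - intros t t' x _ _ Htt' H1 H2. apply Htt'. rewrite <- H1, <- H2. reflexivity.
Qed.

Definition pick {X : Type} (b : bool) (p : X * X) : X := if b then fst p else snd p.

(* Both images would have reflected mean 1 while being disjoint. *)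
Lemma no_two_to_one_translation (T : list G) (F : G -> G * G) :
  (forall x, In (fst (F x)) T /\ In (snd (F x)) T) ->
  (forall x y b b', (x <> y \/ b <> b') -> mul x (pick b (F x)) <> mul y (pick b' (F y))) ->
  False.
Proof.
  intros HF Hinj.
  set (Im b := fun y => exists x, y = mul x (pick b (F x))).
  assert (Hfull : forall b, nu (Im b) = 1%R).
  { intros b. apply (nu_translate_image T); [intros x; destruct b; apply HF|].
    intros x y Hxy. apply Hinj. auto. }
  assert (Hdisj : forall y, ~ (Im true y /\ Im false y)).
  { intros y [[x Hx] [x' Hx']]. apply (Hinj x x' true false); [right; discriminate|].
    rewrite <- Hx, <- Hx'. reflexivity. }
  pose proof (nu_le1 (fun y => Im true y \/ Im false y)) as Hle.
  rewrite nu_add, !Hfull in Hle by exact Hdisj. lra.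
Qed.

End InvariantMean.

Section Cayley.
Variable gens : list G.
Hypothesis gens_sym : Symmetric inv gens.
Hypothesis gens_gen : Generates mul inv e gens.
Hypothesis G_infinite : InfiniteType G.

Local Notation adj := (cayley_adj mul gens).

Definition nbhd (X : list G) : list G := flat_map (fun x => map (mul x) gens) X.

Definition boundary (X : list G) : list G := setminus (nbhd X) X.

Definition thicken (X : list G) : list G := X ++ nbhd X.

Definition prodset (X T : list G) : list G := flat_map (fun x => map (mul x) T) X.

Fixpoint ball (k : nat) : list G :=
  match k with
  | O => [e]
  | S k' => ball k' ++ flat_map (fun s => map (mul s) (ball k')) gens
  end.

Lemma in_prodset y X T : In y (prodset X T) <-> exists x t, In x X /\ In t T /\ y = mul x t.
Proof.
  unfold prodset. rewrite in_flat_map. split.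
  - intros [x [Hx Hy]]. apply in_map_iff in Hy as [t [<- Ht]]. eauto.
  - intros [x [t [Hx [Ht ->]]]]. exists x. split; [exact Hx|]. apply in_map, Ht.
Qed.

Lemma in_nbhd y X : In y (nbhd X) <-> exists x s, In x X /\ In s gens /\ y = mul x s.
Proof. apply in_prodset. Qed.

Lemma in_ballS t k : In t (ball (S k)) <->
  In t (ball k) \/ exists s t', In s gens /\ In t' (ball k) /\ t = mul s t'.
Proof.
  simpl. rewrite in_app_iff, in_flat_map. split.
  - intros [H|[s [Hs H]]]; [now left|]. apply in_map_iff in H as [t' [<- Ht']]. right; eauto.
  - intros [H|[s [t' [Hs [Ht' ->]]]]]; [now left|]. right. exists s. split; [exact Hs|].
    apply in_map, Ht'.
Qed.

Lemma ball_prefix i j : i <= j -> exists s, ball j = ball i ++ s.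
Proof.
  induction 1 as [|j _ [s Hs]]; [exists []; rewrite app_nil_r; reflexivity|].
  simpl. rewrite Hs, <- app_assoc. eexists. reflexivity.
Qed.

Lemma card_thicken X : card (thicken X) = card X + card (boundary X).
Proof.
  unfold thicken. rewrite <- card_app_disjoint.
  - apply Nat.le_antisymm; apply card_incl; intros x; unfold boundary;
      rewrite !in_app_iff, in_setminus; pose proof (classic (In x X)); tauto.
  - intros x Hx Hb. apply in_setminus in Hb. tauto.
Qed.

Lemma in_thicken_iter p X y :
  In y (Nat.iter p thicken X) -> exists x t, In x X /\ In t (ball p) /\ y = mul x t.
Proof.
  revert X y; induction p as [|p IH]; intros X y Hy.
  - exists y, e. rewrite mulg1. simpl. intuition.
  - rewrite Nat.iter_succ_r in Hy. destruct (IH _ _ Hy) as [z [t [Hz [Ht ->]]]].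
    apply in_app_iff in Hz as [Hz|Hz].
    + exists z, t. rewrite in_ballS. intuition.
    + apply in_nbhd in Hz as [x [s [Hx [Hs ->]]]].
      exists x, (mul s t). rewrite in_ballS, mulA. repeat split; eauto 6.
Qed.

Lemma dist_le_succ k u v : dist_le adj k u v -> dist_le adj (S k) u v.
Proof.
  revert u; induction k as [|k IH]; intros u H; simpl in *; [now left|].
  destruct H as [H|[w [Hw H]]]; [now left|]. right. eauto.
Qed.

Lemma dist_le_ball k t x : In t (ball k) -> dist_le adj k x (mul x t).
Proof.
  revert t x; induction k as [|k IH]; intros t x Ht.
  - destruct Ht as [<-|[]]. simpl. rewrite mulg1. reflexivity.
  - apply in_ballS in Ht as [Ht|[s [t' [Hs [Ht' ->]]]]]; [apply dist_le_succ; auto|].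
    rewrite mulA. destruct (dec x (mul x s)) as [Hx|Hx].
    + rewrite <- Hx. apply dist_le_succ. auto.
    + simpl. right. exists (mul x s). repeat split; eauto.
Qed.

Lemma word_in_ball l : Forall (fun t => In t gens \/ In (inv t) gens) l ->
  In (fold_right mul e l) (ball (length l)).
Proof.
  induction 1 as [|t l Ht Hl IH]; [left; reflexivity|].
  apply in_ballS. right. exists t, (fold_right mul e l). repeat split; auto.
  destruct Ht as [Ht|Ht]; [exact Ht|]. rewrite <- (invgK t). apply gens_sym, Ht.
Qed.

Lemma right_closed_word X l y :
  (forall x s, In x X -> In s gens -> In (mul x s) X) ->
  Forall (fun t => In t gens \/ In (inv t) gens) l -> In y X -> In (mul y (fold_right mul e l)) X.
Proof.
  intros HX Hl. revert y. induction Hl as [|t l Ht Hl IH]; intros y Hy; simpl.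
  - rewrite mulg1. exact Hy.
  - rewrite mulA. apply IH, HX; [exact Hy|].
    destruct Ht as [Ht|Ht]; [exact Ht|]. rewrite <- (invgK t). apply gens_sym, Ht.
Qed.

(* A nonempty finite set with empty boundary would contain all of [G]. *)
Lemma boundary_nonempty X x : In x X -> boundary X <> [].
Proof.
  intros Hx Hb. apply G_infinite. exists X. intros g.
  destruct (gens_gen (mul (inv x) g)) as [l [Hl Hg]].
  rewrite <- (mulKVg x g), Hg. apply (right_closed_word X); [|exact Hl|exact Hx].
  intros y s Hy Hs. destruct (in_dec dec (mul y s) X) as [H|H]; [exact H|].
  exfalso. assert (Hys : In (mul y s) (boundary X)).
  { apply in_setminus. split; [|exact H]. apply in_nbhd. eauto. }
  rewrite Hb in Hys. destruct Hys.
Qed.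

(** * Strong isoperimetry forces paradoxical maps *)

Lemma pow_succ_ge_double N : 1 <= N -> 2 * N ^ N <= (N + 1) ^ N.
Proof.
  intros HN.
  assert (Hbin : forall p, N ^ S p + p * N ^ p <= N * (N + 1) ^ p).
  { induction p as [|p IH]; [simpl; lia|].
    rewrite !Nat.pow_succ_r'. rewrite Nat.pow_succ_r' in IH.
    set (a := N ^ p) in *. set (b := (N + 1) ^ p) in *.
    apply Nat.mul_le_mono_l with (p := N + 1) in IH. nia. }
  specialize (Hbin N). rewrite (Nat.pow_succ_r' N N) in Hbin.
  apply (Nat.mul_le_mono_pos_l _ _ N); lia.
Qed.

Lemma thicken_iter_growth N p X : X <> [] ->
  (forall Y, Y <> [] -> card Y <= N * card (boundary Y)) ->
  (N + 1) ^ p * card X <= N ^ p * card (Nat.iter p thicken X).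
Proof.
  revert X; induction p as [|p IH]; intros X HX HN; [simpl; lia|].
  rewrite Nat.iter_succ_r.
  assert (HXt : thicken X <> []) by (destruct X; [congruence|discriminate]).
  specialize (IH _ HXt HN).
  assert (Hstep : (N + 1) * card X <= N * card (thicken X))
    by (rewrite card_thicken; specialize (HN X HX); nia).
  rewrite !Nat.pow_succ_r'. nia.
Qed.

Lemma isoperimetric_doubling N :
  (forall X, X <> [] -> card X <= N * card (boundary X)) ->
  forall Z, 2 * card Z <= card (prodset Z (ball N)).
Proof.
  intros HN [|z Z']; [apply Nat.le_0_l|]. set (Z := z :: Z').
  assert (HN1 : 1 <= N) by (specialize (HN [e] ltac:(discriminate)); cbn in HN; lia).
  pose proof (thicken_iter_growth N N Z ltac:(discriminate) HN) as Hgrowth.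
  pose proof (pow_succ_ge_double N HN1) as Hdouble.
  assert (HNN : 1 <= N ^ N) by (pose proof (Nat.pow_nonzero N N); lia).
  transitivity (card (Nat.iter N thicken Z)).
  - apply (Nat.mul_le_mono_pos_l _ _ (N ^ N)); nia.
  - apply card_incl. intros y Hy. apply in_prodset, in_thicken_iter, Hy.
Qed.

(* Hall's theorem applied to two copies [(x, true)], [(x, false)] of each
   point of [X], each allowed to marry inside [x T]. *)
Lemma two_to_one_matching (T : list G) :
  (forall Z, 2 * card Z <= card (prodset Z T)) ->
  forall X, exists f : G * bool -> G,
    (forall x b, In x X -> In (f (x, b)) (map (mul x) T)) /\
    (forall x y b b', In x X -> In y X -> f (x, b) = f (y, b') -> x = y /\ b = b').
Proof.
  intros HT X.
  set (L := nodup dec (list_prod X [true; false])).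
  assert (HL : forall x b, In x X -> In (x, b) L)
    by (intros x b Hx; apply nodup_In, in_prod; [|destruct b]; simpl; auto).
  destruct (hall _ _ e (fun p => map (mul (fst p)) T) L (NoDup_nodup _ _)) as [f [Hf1 Hf2]].
  - intros Y HY.
    assert (HY2 : card Y <= 2 * card (map fst Y)).
    { transitivity (card (list_prod (nodup dec (map fst Y)) [true; false])).
      - apply card_incl. intros [x b] Hxb. apply in_prod.
        + apply nodup_In. exact (in_map fst _ _ Hxb).
        + destruct b; simpl; auto.
      - etransitivity; [apply card_le_length|]. rewrite length_prod. simpl. unfold card. lia. }
    etransitivity; [exact HY2|]. etransitivity; [apply HT|].
    apply card_incl. intros y Hy. apply in_prodset in Hy as [x [t [Hx [Ht ->]]]].
    apply in_map_iff in Hx as [[x' b] [<- Hxb]].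
    apply in_flat_map. exists (x', b). split; [exact Hxb|]. apply in_map, Ht.
  - exists f. split.
    + intros x b Hx. apply (Hf1 (x, b)), HL, Hx.
    + intros x y b b' Hx Hy E. apply Hf2 in E; auto. injection E. auto.
Qed.

(** * Compactness: from finite to global paradoxical maps *)

Lemma gens_nonempty : gens <> [].
Proof.
  intros Hnil. apply G_infinite. exists [e]. intros g.
  destruct (gens_gen g) as [[|t l] [Hl ->]]; [left; reflexivity|].
  inversion Hl as [|? ? Ht _]. rewrite Hnil in Ht. simpl in Ht. tauto.
Qed.

Lemma length_ball i : i < length (ball i).
Proof.
  pose proof gens_nonempty as Hne.
  induction i as [|i IH]; [simpl; lia|]. simpl. rewrite length_app.
  destruct gens as [|s gens']; [contradiction|].
  simpl. rewrite length_app, length_map. lia.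
Qed.

Section Compactness.
Variable T : list G.
Hypothesis T_doubling : forall Z, 2 * card Z <= card (prodset Z T).

(* An enumeration of [G], possibly with repetitions. *)
Definition enum (i : nat) : G := nth i (ball i) e.

Lemma enum_surj g : exists i, enum i = g.
Proof.
  destruct (gens_gen g) as [l [Hl ->]]. apply word_in_ball in Hl.
  apply In_nth with (d := e) in Hl as [p [Hp Hnth]].
  exists p. unfold enum. destruct (le_lt_dec (length l) p) as [Hlp|Hpl].
  - destruct (ball_prefix _ _ Hlp) as [s ->]. rewrite app_nth1; assumption.
  - destruct (ball_prefix p (length l) ltac:(lia)) as [s Hs]. rewrite Hs in Hnth.
    rewrite app_nth1 in Hnth; [exact Hnth | apply length_ball].
Qed.

Definition first_occ (i : nat) : Prop := forall j, j < i -> enum j <> enum i.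

Lemma first_occ_neq i j : first_occ i -> first_occ j -> i <> j -> enum i <> enum j.
Proof.
  intros Hi Hj Hij. destruct (le_lt_dec i j); [apply Hj; lia|].
  intros E. exact (Hi j ltac:(lia) (eq_sym E)).
Qed.

Definition pairs : list (G * G) := list_prod T T.

(* [h i] is the pair of partners of [enum i]; only first occurrences count. *)
Definition pairing_upto (n : nat) (h : nat -> G * G) : Prop :=
  (forall i, i < n -> In (h i) pairs) /\
  (forall i j b b', i < n -> j < n -> first_occ i -> first_occ j -> (i <> j \/ b <> b') ->
      mul (enum i) (pick b (h i)) <> mul (enum j) (pick b' (h j))).

Lemma exists_pairing_upto n : exists h, pairing_upto n h.
Proof.
  destruct (two_to_one_matching T T_doubling (map enum (seq 0 n))) as [f [Hf1 Hf2]].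
  exists (fun i => (mul (inv (enum i)) (f (enum i, true)), mul (inv (enum i)) (f (enum i, false)))).
  assert (Hin : forall i, i < n -> In (enum i) (map enum (seq 0 n)))
    by (intros i Hi; apply in_map, in_seq; lia).
  assert (HfT : forall i b, i < n -> In (mul (inv (enum i)) (f (enum i, b))) T).
  { intros i b Hi. specialize (Hf1 (enum i) b (Hin i Hi)).
    apply in_map_iff in Hf1 as [t [<- Ht]]. rewrite mulKg. exact Ht. }
  split.
  - intros i Hi. apply in_prod; apply HfT, Hi.
  - intros i j b b' Hi Hj Fi Fj Hne E.
    assert (E' : f (enum i, b) = f (enum j, b'))
      by (destruct b, b'; simpl in E; rewrite !mulKVg in E; exact E).
    apply Hf2 in E' as [Eij Ebb]; auto.
    destruct Hne as [Hne|Hne]; [exact (first_occ_neq i j Fi Fj Hne Eij) | exact (Hne Ebb)].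
Qed.

Definition pairing (n : nat) : nat -> G * G :=
  proj1_sig (constructive_indefinite_description _ (exists_pairing_upto n)).

Lemma pairing_spec n : pairing_upto n (pairing n).
Proof. unfold pairing. destruct (constructive_indefinite_description _ _). assumption. Qed.

Definition agrees (p : list (G * G)) (h : nat -> G * G) : Prop :=
  forall i, i < length p -> h i = nth i p (e, e).

(* [p] is a prefix of [pairing n] for infinitely many [n] (König's lemma). *)
Definition extendable (p : list (G * G)) : Prop :=
  forall M, exists n, M <= n /\ agrees p (pairing n).

Lemma extendable_step p : extendable p -> exists c, extendable (p ++ [c]).
Proof.
  intros Hp. apply NNPP. intros Hno.
  assert (Hfin : forall c, In c pairs ->
                   exists M, forall n, M <= n -> ~ agrees (p ++ [c]) (pairing n)).
  { intros c _. apply NNPP. intros H. apply Hno. exists c. intros M.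
    apply NNPP. intros H'. apply H. exists M. intros n Hn Ha. apply H'. eauto. }
  destruct (eventually_forall_in pairs _ Hfin) as [M0 HM0].
  destruct (Hp (M0 + S (length p))) as [n [Hn Ha]].
  set (c := pairing n (length p)).
  apply (HM0 c (proj1 (pairing_spec n) (length p) ltac:(lia)) n ltac:(lia)).
  intros i Hi. rewrite length_app in Hi. simpl in Hi.
  destruct (Nat.eq_dec i (length p)) as [->|Hip].
  - rewrite nth_middle. reflexivity.
  - rewrite app_nth1 by lia. apply Ha. lia.
Qed.

Fixpoint limit_prefix (i : nat) : list (G * G) :=
  match i with
  | O => []
  | S i' => limit_prefix i' ++
             [epsilon (inhabits (e, e)) (fun c => extendable (limit_prefix i' ++ [c]))]
  end.

Lemma limit_prefix_extendable i : extendable (limit_prefix i).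
Proof.
  induction i as [|i IH]; simpl.
  - intros M. exists M. split; [reflexivity|]. intros i Hi. simpl in Hi. lia.
  - apply epsilon_spec, extendable_step, IH.
Qed.

Lemma length_limit_prefix i : length (limit_prefix i) = i.
Proof. induction i as [|i IH]; simpl; [|rewrite length_app, IH; simpl]; lia. Qed.

Definition limit_pairing (i : nat) : G * G := nth i (limit_prefix (S i)) (e, e).

Lemma nth_limit_prefix i j : i < j -> nth i (limit_prefix j) (e, e) = limit_pairing i.
Proof.
  induction 1 as [|j Hij IH]; [reflexivity|].
  simpl. rewrite app_nth1; [exact IH|]. rewrite length_limit_prefix. lia.
Qed.

Lemma limit_pairing_agrees i : exists n, i < n /\ forall j, j <= i -> pairing n j = limit_pairing j.
Proof.
  destruct (limit_prefix_extendable (S i) (S i)) as [n [Hn Ha]].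
  exists n. split; [lia|]. intros j Hj.
  rewrite Ha by (rewrite length_limit_prefix; lia). apply nth_limit_prefix. lia.
Qed.

Definition first_index (x : G) : nat := epsilon (inhabits 0) (fun i => enum i = x /\ first_occ i).

Lemma first_index_spec x : enum (first_index x) = x /\ first_occ (first_index x).
Proof.
  unfold first_index. apply epsilon_spec.
  destruct (exists_least (fun i => enum i = x) (enum_surj x)) as [i [Hi Hmin]].
  exists i. split; [exact Hi|]. intros j Hj E. apply (Hmin j Hj). congruence.
Qed.

Theorem global_two_to_one : exists F : G -> G * G,
  (forall x, In (fst (F x)) T /\ In (snd (F x)) T) /\
  (forall x y b b', (x <> y \/ b <> b') -> mul x (pick b (F x)) <> mul y (pick b' (F y))).
Proof.
  exists (fun x => limit_pairing (first_index x)). split.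
  - intros x. destruct (limit_pairing_agrees (first_index x)) as [n [Hn Ha]].
    rewrite <- Ha by reflexivity. apply in_prod_iff.
    rewrite <- surjective_pairing. apply (proj1 (pairing_spec n)), Hn.
  - intros x y b b' Hne.
    destruct (first_index_spec x) as [Ex Fx], (first_index_spec y) as [Ey Fy].
    set (i := first_index x) in *. set (j := first_index y) in *.
    destruct (limit_pairing_agrees (i + j)) as [n [Hn Ha]].
    rewrite <- Ex at 1. rewrite <- Ey at 1. rewrite <- (Ha i), <- (Ha j) by lia.
    apply (proj2 (pairing_spec n)); try assumption; try lia.
    destruct Hne as [Hne|Hne]; [left; intros Hij; apply Hne; rewrite <- Ex, <- Ey, Hij|right]; auto.
Qed.

End Compactness.

(** * Construction of the UFOs *)

Lemma exists_boundary_minimal q : forall b n,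
  (exists X, n <= card X /\ card (boundary X) <= b) -> 2 * q * b < n ->
  exists A n0, n0 <= card A /\ q * card (boundary A) < n0 /\
    forall X, n0 - q * card (boundary A) <= card X -> card (boundary A) <= 2 * card (boundary X).
Proof.
  induction b as [b IH] using lt_wf_ind. intros n [X [HXn HXb]] Hn.
  destruct (classic (exists X', n <= card X' /\ card (boundary X') < b))
    as [[X' [HX'n HX'b]]|Hmin].
  { apply (IH _ HX'b n); [eauto | nia]. }
  assert (Hb : card (boundary X) = b).
  { apply Nat.le_antisymm; [exact HXb|]. apply Nat.nlt_ge. intros H. apply Hmin. eauto. }
  destruct (classic (forall X1, n - q * b <= card X1 -> b <= 2 * card (boundary X1)))
    as [Hall|[X1 HX1]%not_all_ex_not].
  - exists X, n. rewrite Hb. repeat split; [exact HXn | nia | exact Hall].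
  - apply imply_to_and in HX1 as [HX1n HX1b].
    apply (IH (card (boundary X1)) ltac:(lia) (n - q * b)); [eauto | nia].
Qed.

Lemma path_exits_through_boundary A l u :
  chain adj u l -> In u A -> ~ In (last l u) A ->
  exists x, In x (u :: l) /\ In x (boundary A).
Proof.
  revert u. induction l as [|y l IH]; intros u Hc Hu Hl; [contradiction|].
  rewrite last_cons in Hl. destruct Hc as [Huy Hc].
  destruct (in_dec dec y A) as [Hy|Hy].
  - destruct (IH y Hc Hy Hl) as [x [Hx1 Hx2]]. exists x. split; [right|]; assumption.
  - exists y. split; [right; left; reflexivity|].
    destruct Huy as [_ [s [Hs ->]]]. apply in_setminus. split; [|exact Hy].
    apply in_nbhd. eauto.
Qed.

Lemma thicken_iter_card_ge beta n1 :
  (forall X, n1 <= card X -> beta <= 2 * card (boundary X)) ->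
  forall j Z, n1 <= card Z -> 2 * card Z + j * beta <= 2 * card (Nat.iter j thicken Z).
Proof.
  intros Hiso j. induction j as [|j IH]; intros Z HZ; [simpl; lia|].
  rewrite Nat.iter_succ_r. specialize (Hiso Z HZ).
  pose proof (card_thicken Z). specialize (IH (thicken Z) ltac:(lia)). lia.
Qed.

Definition reach (k : nat) (A : list G) : list (G * G) :=
  filter (fun p => negb (inb (snd p) (A ++ boundary A)))
         (flat_map (fun x => map (fun t => (x, mul x t)) (ball k)) A).

Lemma in_reach k A x y : In (x, y) (reach k A) <->
  In x A /\ ~ In y A /\ ~ In y (boundary A) /\ exists t, In t (ball k) /\ y = mul x t.
Proof.
  unfold reach, inb. rewrite filter_In, in_flat_map. simpl.
  destruct (in_dec dec y (A ++ boundary A)) as [Hy|Hy]; rewrite in_app_iff in Hy; simpl.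
  - split; [intros [_ H]; discriminate H | tauto].
  - split.
    + intros [[x' [Hx' Hp]] _]. apply in_map_iff in Hp as [t [E Ht]]. injection E as <- <-.
      repeat split; eauto; intros H; apply Hy; auto.
    + intros [Hx [_ [_ [t [Ht ->]]]]]. split; [|reflexivity].
      exists x. split; [exact Hx|]. apply in_map_iff. eauto.
Qed.

(* [F = ∂A] separates [A] from everything outside. *)
Lemma ufo_of_reach_matching m k r A Ms :
  incl Ms (reach k A) -> NoDup (map fst Ms) -> NoDup (map snd Ms) -> Ms <> [] ->
  m * card (boundary A) <= length Ms ->
  UFO adj m k r (map fst Ms) (nodup dec (boundary A)) (map snd Ms).
Proof.
  intros HMs Hnd1 Hnd2 Hne Hlen.
  assert (HU : forall p, In p Ms -> In (fst p) A /\ ~ In (snd p) A /\ ~ In (snd p) (boundary A) /\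
                                  exists t, In t (ball k) /\ snd p = mul (fst p) t)
    by (intros [x y] Hp; apply in_reach, HMs, Hp).
  assert (HF : forall f, In f (nodup dec (boundary A)) -> ~ In f A)
    by (intros f Hf; apply nodup_In, in_setminus in Hf; tauto).
  destruct (NoDup_fst_function e Ms Hnd1) as [mu Hmu].
  repeat split; try assumption.
  - apply NoDup_nodup.
  - intros x Hx Hf. apply in_map_iff in Hx as [p [<- Hp]]. apply (HF _ Hf), (HU p Hp).
  - intros x Hx Ho. apply in_map_iff in Hx as [p [<- Hp]]. apply in_map_iff in Ho as [p' [E Hp']].
    destruct (HU p Hp) as [HpA _], (HU p' Hp') as [_ [Hp'A _]]. apply Hp'A. rewrite E. exact HpA.
  - intros x Hf Ho. apply in_map_iff in Ho as [p [<- Hp]].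
    destruct (HU p Hp) as [_ [_ [Hpb _]]]. apply Hpb. apply (nodup_In dec). exact Hf.
  - intros E. apply Hne. apply map_eq_nil in E. exact E.
  - rewrite length_map. exact Hlen.
  - exists mu. repeat split.
    + intros u Hu. apply in_map_iff in Hu as [p [<- Hp]]. rewrite Hmu by exact Hp. apply in_map, Hp.
    + intros u1 u2 Hu1 Hu2 E.
      apply in_map_iff in Hu1 as [p1 [<- Hp1]]. apply in_map_iff in Hu2 as [p2 [<- Hp2]].
      rewrite !Hmu in E by assumption. f_equal. exact (NoDup_map_inj snd Ms p1 p2 Hnd2 Hp1 Hp2 E).
    + intros o Ho. apply in_map_iff in Ho as [p [<- Hp]].
      exists (fst p). split; [apply in_map, Hp | apply Hmu, Hp].
    + intros u Hu. apply in_map_iff in Hu as [p [<- Hp]]. rewrite Hmu by exact Hp.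
      destruct (HU p Hp) as [_ [_ [_ [t [Ht ->]]]]]. apply dist_le_ball, Ht.
  - intros u l Hu [_ Hc] Hl. left.
    apply in_map_iff in Hu as [p [<- Hp]]. apply in_map_iff in Hl as [p' [E Hp']].
    destruct (path_exits_through_boundary A l (fst p) Hc (proj1 (HU p Hp)))
      as [x [Hx Hxb]]; [rewrite <- E; apply (HU p' Hp')|].
    exists x. split; [exact Hx | apply nodup_In, Hxb].
Qed.

(* If a maximal matching inside [reach k A] is small, the unmatched part of
   [A] grows by [beta / 2] per thickening step but stays inside [A], its
   boundary and the matched outside points. *)
Lemma reach_matching_large m A n0 Ms :
  let beta := card (boundary A) in
  let k := 4 * (m + 1) + 2 in
  n0 <= card A -> 1 <= beta ->
  (forall X, n0 - 2 * (m + 1) * beta <= card X -> beta <= 2 * card (boundary X)) ->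
  incl Ms (reach k A) ->
  (forall c, In c (reach k A) -> In (fst c) (map fst Ms) \/ In (snd c) (map snd Ms)) ->
  (m + 1) * beta <= length Ms.
Proof.
  intros beta k Hn0 Hbeta Hiso HMs Hmax. apply Nat.nlt_ge. intros Hsmall.
  set (A' := setminus A (map fst Ms)).
  assert (HA' : card A <= card A' + length Ms).
  { transitivity (card (map fst Ms ++ A')).
    - apply card_incl. intros x Hx. apply in_app_iff.
      destruct (in_dec dec x (map fst Ms)); [left | right; apply in_setminus]; auto.
    - pose proof (card_app_le (map fst Ms) A'). pose proof (card_le_length (map fst Ms)).
      rewrite length_map in *. lia. }
  pose proof (thicken_iter_card_ge beta _ Hiso k A' ltac:(lia)) as Hgrow.
  assert (Hincl : incl (Nat.iter k thicken A') (A ++ boundary A ++ map snd Ms)).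
  { intros y Hy. apply in_thicken_iter in Hy as [x [t [Hx [Ht ->]]]].
    apply in_setminus in Hx as [Hx HxMs]. rewrite !in_app_iff.
    destruct (in_dec dec (mul x t) A) as [H1|H1]; [now left|].
    destruct (in_dec dec (mul x t) (boundary A)) as [H2|H2]; [now right; left|].
    destruct (Hmax (x, mul x t)) as [H3|H3]; [apply in_reach; eauto 6 | contradiction | auto]. }
  apply card_incl in Hincl.
  pose proof (card_app_le A (boundary A ++ map snd Ms)).
  pose proof (card_app_le (boundary A) (map snd Ms)).
  pose proof (card_le_length (map snd Ms)). rewrite length_map in *.
  unfold k, beta in *. nia.
Qed.

Section Amenable.
Hypothesis G_amenable : Amenable mul inv.

(* Otherwise balls double every finite set, which yields a paradoxical map
   incompatible with an invariant mean. *)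
Lemma folner N : exists X, X <> [] /\ N * card (boundary X) < card X.
Proof.
  apply NNPP. intros Hno.
  assert (HN : forall X, X <> [] -> card X <= N * card (boundary X)).
  { intros X HX. apply Nat.nlt_ge. intros H. apply Hno. eauto. }
  destruct (global_two_to_one _ (isoperimetric_doubling N HN)) as [F [HF1 HF2]].
  destruct G_amenable as [m [Hm0 [Hm1 [Hmadd Hminv]]]].
  exact (no_two_to_one_translation m Hm0 Hm1 Hmadd Hminv _ F HF1 HF2).
Qed.

Theorem ufo_exists m r : exists U F O, UFO adj m (4 * (m + 1) + 2) r U F O.
Proof.
  set (q := 2 * (m + 1)).
  destruct (folner (2 * q)) as [X0 [HX0 HX0b]].
  destruct (exists_boundary_minimal q (card (boundary X0)) (card X0)) as [A [n0 [HA [HAq Hiso]]]];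
    [eauto | lia|].
  assert (Hbeta : 1 <= card (boundary A)).
  { destruct (card (boundary A)) eqn:E; [|lia]. exfalso.
    destruct A as [|a A']; [cbn in HA; lia|].
    exact (boundary_nonempty (a :: A') a (or_introl eq_refl) (card_eq0 _ E)). }
  destruct (exists_maximal_matching _ _ (reach (4 * (m + 1) + 2) A))
    as [Ms [HMs [Hnd1 [Hnd2 Hmax]]]].
  pose proof (reach_matching_large m A n0 Ms HA Hbeta Hiso HMs Hmax) as Hlarge.
  exists (map fst Ms), (nodup dec (boundary A)), (map snd Ms).
  apply ufo_of_reach_matching; auto; [|nia].
  intros ->. simpl in Hlarge. lia.
Qed.

End Amenable.

End Cayley.
End Group.

Theorem mainTheorem5 (G : Type) (mul : G -> G -> G) (inv : G -> G) (e : G)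
  (HG : IsGroup mul inv e)
  (Hfg : FinitelyGenerated mul inv e)
  (Hinf : InfiniteType G)
  (Ham : Amenable mul inv) :
  ExtraterrestrialGroup mul inv e.
Proof.
  intros S HS Hgen m. exists (4 * (m + 1) + 2). intros r.
  exact (ufo_exists G mul inv e HG S HS Hgen Hinf Ham m r).
Qed.
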